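(* In any pasting scheme, the reflexive and transitive closure of the relation ''$\alpha$ lies directly above $\beta$'' on the set of atomic 2-cells is antisymmetric, and hence is a partial order.
   Context: A plane graph is a finite connected directed graph with an embedding in the plane $\mathbb C$. Its faces are the closures of the connected components of the complement; the unbounded one is the exterior face, the others interior faces. Each edge has a face on its left and one on its right. The exterior face is anchorable if the set of edges having the exterior face on their left and the set having it on their right each form a nonempty directed path from a vertex $s_{\mathcal P}$ to a vertex $t_{\mathcal P}$ (these are $\mathrm{dom}_{\mathcal P}$, $\mathrm{cod}_{\mathcal P}$). An interior face $F$ is anchorable if the set of edges having $F$ on their right and the set having $F$ on their left each form a nonempty directed path from $s_F$ to $t_F$, with no common edges and no common vertices other than $s_F,t_F$ (these are $\mathrm{dom}_F$, $\mathrm{cod}_F$). A pasting scheme is a finite connected plane graph all of whose faces are anchorable, with $s_{\mathcal P}$ the only vertex with no incoming edges and $t_{\mathcal P}$ the only vertex with no outgoing edges. Interior faces are atomic 2-cells. An atomic 2-cell $\alpha$ lies directly above an atomic 2-cell $\beta$ if there is an edge belonging to both $\mathrm{cod}_\alpha$ and $\mathrm{dom}_\beta$. *)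

(* Plane graphs are represented combinatorially by a
   rotation system (combinatorial map) of genus 0 with a chosen outer face. *)
From mathcomp Require Import all_boot.
From mathcomp Require Import fingroup perm.

Set Implicit Arguments.
Unset Strict Implicit.
Unset Printing Implicit Defensive.

Section PlaneGraph.
Variables (V E : finType) (src tgt : E -> V).

(* A dart is an edge together with an orientation: (e, true) runs along e
   from src e to tgt e, (e, false) runs against it. *)
Definition dart := (E * bool)%type.

Definition dtail (d : dart) : V := if d.2 then src d.1 else tgt d.1.
Definition dflip (d : dart) : dart := (d.1, ~~ d.2).

(* sigma d = the next dart clockwise around the tail vertex of d;
   sigma is a single cycle on the darts at each vertex. *)
Definition rotation_system (sigma : {perm dart}) : Prop :=
  (forall d, dtail (sigma d) = dtail d) /\
  (forall d d', dtail d = dtail d' -> fconnect sigma d d').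

(* Face permutation: following the boundary of the face on the left of d. *)
Definition facep (sigma : {perm dart}) (d : dart) : dart := sigma (dflip d).

Definition face_of (sigma : {perm dart}) (d : dart) : {set dart} :=
  [set d' | fconnect (facep sigma) d d'].

Definition faces (sigma : {perm dart}) : {set {set dart}} :=
  [set face_of sigma d | d : dart].

Definition adjacent : rel V :=
  [rel u v | [exists e, ((src e == u) && (tgt e == v)) ||
                        ((src e == v) && (tgt e == u))]].

Definition graph_connected : Prop := forall u v : V, connect adjacent u v.

(* Euler's formula for a connected map: genus 0, i.e. a plane embedding. *)
Definition planar_map (sigma : {perm dart}) : Prop :=
  #|V| + #|faces sigma| = #|E| + 2.

Definition plane_graph (sigma : {perm dart}) (ext : {set dart}) : Prop :=
  [/\ rotation_system sigma, graph_connected, planar_map sigma &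
      ext \in faces sigma].

Definition left_edges (F : {set dart}) : {set E} := [set e | (e, true) \in F].
Definition right_edges (F : {set dart}) : {set E} := [set e | (e, false) \in F].

Definition dpath (s t : V) (p : seq E) : bool :=
  if p is e0 :: p' then
    [&& src e0 == s, path (fun e f => tgt e == src f) e0 p',
        tgt (last e0 p') == t & uniq (s :: map tgt p)]
  else false.

Definition forms_path (A : {set E}) (s t : V) : Prop :=
  exists p : seq E, dpath s t p /\ (forall e, (e \in A) = (e \in p)).

Definition vertices_of (A : {set E}) : {set V} :=
  [set v | [exists e in A, (src e == v) || (tgt e == v)]].

Definition anchorable_exterior (ext : {set dart}) (sP tP : V) : Prop :=
  forms_path (left_edges ext) sP tP /\ forms_path (right_edges ext) sP tP.

Definition anchorable_interior (F : {set dart}) : Prop :=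
  exists sF tF : V,
    [/\ forms_path (right_edges F) sF tF, forms_path (left_edges F) sF tF,
        right_edges F :&: left_edges F = set0 &
        vertices_of (right_edges F) :&: vertices_of (left_edges F)
          \subset [set sF; tF]].

Definition atomic_cells (sigma : {perm dart}) (ext : {set dart})
  : {set {set dart}} := faces sigma :\ ext.

Definition pasting_scheme (sigma : {perm dart}) (ext : {set dart}) : Prop :=
  plane_graph sigma ext /\
  exists sP tP : V,
    [/\ anchorable_exterior ext sP tP,
        (forall F, F \in atomic_cells sigma ext -> anchorable_interior F),
        (forall v, (forall e, tgt e != v) <-> v = sP) &
        (forall v, (forall e, src e != v) <-> v = tP)].

(* alpha lies directly above beta: some edge is in cod_alpha (alpha on its
   left) and in dom_beta (beta on its right). *)
Definition directly_above (a b : {set dart}) : bool :=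
  [exists e, ((e, true) \in a) && ((e, false) \in b)].

Definition above_rel (sigma : {perm dart}) (ext : {set dart})
  : rel {set dart} :=
  [rel a b | [&& a \in atomic_cells sigma ext, b \in atomic_cells sigma ext &
                 directly_above a b]].

End PlaneGraph.

From HB Require Import structures.
From mathcomp Require Import all_boot all_order all_algebra.
From mathcomp Require Import fingroup perm ring zify.

Set Implicit Arguments.
Unset Strict Implicit.
Unset Printing Implicit Defensive.

Import Order.TTheory GRing.Theory Num.Theory.

(* A cycle a_0, ..., a_n = a_0 of atomic cells, each directly above the next,
   gives a nonnegative flow phi on edges: the sum of the indicators of the
   edges shared by consecutive cells.  Its dot product with the jump
   y(left face) - y(right face) of any face function y telescopes to 0.  By
   Euler's formula, gradients of vertex potentials and jumps of face functions
   are orthogonal subspaces of Q^E of complementary dimensions, so phi is the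
   gradient of a potential x, nondecreasing along edges, constant along the
   exterior boundary and increasing across the edge shared by a_0 and a_1.
   The set U of vertices above the level of the source then contradicts two
   counts.  Euler's formula, applied to the cochains supported near U, gives
   |E_U| < |U| + |F_U| for the edges E_U and faces F_U touching U.  On the
   other hand, the angles at U are either in/out switches of the rotation or
   corners where a face boundary changes direction; every vertex of U has two
   switches, and every face of F_U, bounded by two directed paths, has either
   two such corners at U or one corner and two boundary edges crossing the
   cut around U, whence |U| + |F_U| <= |E_U|.
   The same counting shows that every vertex is reachable from the source. *)

Lemma card_sum_fibers (T I : finType) (f : T -> I) (P : pred T) :
  #|P| = \sum_i #|[pred x | P x & f x == i]|.
Proof.
rewrite -sum1_card (partition_big f xpredT) //=.
by apply: eq_bigr => i _; rewrite -sum1_card.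
Qed.

Lemma card_sum_bool (T : finType) (A : {pred T}) : #|A| = \sum_x (x \in A).
Proof. by rewrite -sum1_card big_mkcond; apply: eq_bigr => x _; case: (x \in A). Qed.

Lemma fconnect_exit (T : finType) (f : T -> T) (p : pred T) x y :
  fconnect f x y -> p x -> ~~ p y -> exists z, [/\ fconnect f x z, p z & ~~ p (f z)].
Proof.
move/iter_findex; move: (findex f x y) => n <-.
elim: n x => [|n IHn] z /=; first by move=> ->.
move=> pz; rewrite -iterS iterSr.
have [pfz /(IHn _ pfz) [w [fw pw npw]]|npfz _] := boolP (p (f z)).
  by exists w; split=> //; apply: connect_trans fw; apply: fconnect1.
by exists z; rewrite connect0.
Qed.

Lemma connect_within (T : finType) (e : rel T) (a : pred T) x y :
    (forall z, connect e x z -> connect e z y -> a z) ->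
  connect e x y -> connect [rel u v | [&& a u, a v & e u v]] x y.
Proof.
move=> between /connectP [p xp yl]; rewrite {y}yl in between *.
elim: p x xp between => [|z p IHp] x /=; first by rewrite connect0.
case/andP => xz zp between; have xz' : connect e x z := connect1 xz.
have zl : connect e z (last z p) by apply/connectP; exists p.
apply: connect_trans (connect1 _) (IHp z zp _) => [|w zw wl].
  by rewrite /= xz !between ?connect0 // (connect_trans xz').
by apply: between => //; apply: connect_trans zw.
Qed.

Section Faces.
Variables (V E : finType) (src tgt : E -> V) (sigma : {perm dart E}).
Local Notation dart := (dart E).
Local Notation dtail := (dtail src tgt).

Definition dhead (d : dart) : V := dtail (dflip d).

Lemma dflipK : involutive (@dflip E).
Proof. by case=> e b; rewrite /dflip /= negbK. Qed.

Lemma big_dart (R : Type) (idx : R) (op : Monoid.com_law idx) (F : dart -> R) :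
  \big[op/idx]_d F d = \big[op/idx]_e op (F (e, true)) (F (e, false)).
Proof.
rewrite (eq_bigr (fun d => F (d.1, d.2))) => [|[] //].
by rewrite -(pair_bigA _ (fun e b => F (e, b))); apply: eq_bigr => e _; rewrite big_bool.
Qed.

Lemma adjacent_dart u v : adjacent src tgt u v -> exists a, dtail a = u /\ dhead a = v.
Proof.
by case/existsP=> e /orP[] /andP[/eqP <- /eqP <-]; [exists (e, true) | exists (e, false)].
Qed.

Definition arc : rel V := [rel u v | [exists e, (src e == u) && (tgt e == v)]].

Definition inner_vertex (u : V) : Prop := (exists e, src e = u) /\ (exists e, tgt e = u).

Lemma facep_inj : injective (facep sigma).
Proof. by move=> x y /perm_inj; apply: (inv_inj dflipK). Qed.

Lemma face_sym : connect_sym (frel (facep sigma)).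
Proof. exact: fconnect_sym facep_inj. Qed.

Lemma mem_face d : d \in face_of sigma d.
Proof. by rewrite inE connect0. Qed.

Lemma face_of_eq d d' : d' \in face_of sigma d -> face_of sigma d' = face_of sigma d.
Proof.
by rewrite inE => dd'; apply/setP => z; rewrite !inE (same_connect face_sym dd').
Qed.

Lemma face_of_facep d : face_of sigma (facep sigma d) = face_of sigma d.
Proof. by apply: face_of_eq; rewrite inE fconnect1. Qed.

Lemma face_of_in_faces d : face_of sigma d \in faces sigma.
Proof. exact: imset_f. Qed.

Lemma facesP F d : F \in faces sigma -> d \in F -> F = face_of sigma d.
Proof. by case/imsetP=> d0 _ -> /face_of_eq ->. Qed.

Lemma mem_facep F d : F \in faces sigma -> (facep sigma d \in F) = (d \in F).
Proof.
by case/imsetP=> d0 _ ->; rewrite !inE -(same_connect_r face_sym (fconnect1 _ d)).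
Qed.

Definition face_t := {F : {set dart} | F \in faces sigma}.
Definition face_t_of (d : dart) : face_t := exist _ (face_of sigma d) (face_of_in_faces d).

Lemma face_t_of_facep d : face_t_of (facep sigma d) = face_t_of d.
Proof. by apply: val_inj; rewrite /= face_of_facep. Qed.

Lemma mem_face_t (F : face_t) d : (d \in val F) = (face_t_of d == F).
Proof.
case: F => F Ffaces /=; apply/idP/eqP => [dF|/(congr1 val) /= <-]; last exact: mem_face.
by apply: val_inj; rewrite /= -(facesP Ffaces dF).
Qed.

Lemma face_t_ofP (F : face_t) : exists d, F = face_t_of d.
Proof. by case: F => F /[dup] /imsetP[d _ ->] Ffaces; exists d; apply: val_inj. Qed.

Hypothesis rot : rotation_system src tgt sigma.

Lemma dtail_sigma d : dtail (sigma d) = dtail d.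
Proof. by case: rot. Qed.

Lemma dtail_facep d : dtail (facep sigma d) = dhead d.
Proof. exact: dtail_sigma. Qed.

Lemma dtail_fconnect d d' : fconnect sigma d d' -> dtail d' = dtail d.
Proof. by move/iter_findex <-; elim: (findex _ _ _) => //= n <-; apply: dtail_sigma. Qed.

End Faces.

(** * Planar duality for rational cochains *)

Notation cochain T := {ffun T -> rat^o}.

Section Cochains.
Variables (V E : finType) (src tgt : E -> V) (sigma : {perm dart E}).
Local Notation dtail := (dtail src tgt).
Local Notation dhead := (dhead src tgt).
Local Notation face_t := (face_t sigma).
Local Notation face_t_of := (face_t_of sigma).
Local Open Scope ring_scope.

Definition grad (x : cochain V) : cochain E := [ffun e => x (tgt e) - x (src e)].

Definition jump (y : cochain face_t) : cochain E :=
  [ffun e => y (face_t_of (e, true)) - y (face_t_of (e, false))].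

Definition dot (a b : cochain E) : rat := \sum_e a e * b e.

Fact grad_is_linear : linear grad.
Proof. by move=> k x y; apply/ffunP=> e; rewrite !ffunE /GRing.scale /=; ring. Qed.

Fact jump_is_linear : linear jump.
Proof. by move=> k x y; apply/ffunP=> e; rewrite !ffunE /GRing.scale /=; ring. Qed.

HB.instance Definition _ := GRing.isLinear.Build rat _ _ _ grad grad_is_linear.
HB.instance Definition _ := GRing.isLinear.Build rat _ _ _ jump jump_is_linear.

Lemma dim_cochain (T : finType) : \dim (fullv : {vspace cochain T}) = #|T|.
Proof. by rewrite dimvf /dim /= muln1. Qed.

Lemma dotDl a b c : dot (a + b) c = dot a c + dot b c.
Proof. by rewrite /dot -big_split; apply: eq_bigr => e _; rewrite ffunE mulrDl. Qed.

Lemma dotZl k a b : dot (k *: a) b = k * dot a b.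
Proof. by rewrite /dot mulr_sumr; apply: eq_bigr => e _; rewrite ffunE mulrA. Qed.

Lemma dot_self_eq0 z : dot z z = 0 -> z = 0.
Proof.
move=> zz0; apply/ffunP => e; rewrite ffunE.
have /eqP := psumr_eq0P (fun i _ => sqr_ge0 (z i)) zz0 (i := e) isT.
by rewrite mulf_eq0 orbb => /eqP.
Qed.

Lemma dim_const_le1 (T : finType) (U : {vspace cochain T}) :
  (forall f, f \in U -> forall u v, f u = f v) -> (\dim U <= 1)%N.
Proof.
move=> Uconst; have U_line : (U <= <[[ffun _ : T => 1 : rat^o]]>)%VS.
  apply/subvP => f /Uconst fconst; apply/vlineP.
  case: (pickP (@predT T)) => [t0 _|T0]; [exists (f t0) | exists 0].
    by apply/ffunP => t; rewrite !ffunE (fconst t t0) /GRing.scale /= mulr1.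
  by apply/ffunP => t; have := T0 t.
by apply: leq_trans (dimvS U_line) _; rewrite dim_vline leq_b1.
Qed.

Section Planar.
Hypothesis rot : rotation_system src tgt sigma.

(* Summed over darts, the two halves agree after reindexing by [facep], which
   keeps the face and sends the head of d to the tail of [facep d]. *)
Lemma dot_grad_jump x y : dot (grad x) (jump y) = 0.
Proof.
pose G d := (x (dhead d) - x (dtail d)) * y (face_t_of d).
have -> : dot (grad x) (jump y) = \sum_d G d.
  by rewrite big_dart; apply: eq_bigr => e _; rewrite /G !ffunE /=; ring.
rewrite /G; under eq_bigr do rewrite mulrBl.
apply/eqP; rewrite sumrB subr_eq0; apply/eqP.
rewrite [RHS](reindex_inj (@facep_inj _ sigma)) /=.
by apply: eq_bigr => d _; rewrite face_t_of_facep dtail_facep.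
Qed.

Hypothesis conn : graph_connected src tgt.

Lemma grad_eq0_const x : grad x = 0 -> forall u v, x u = x v.
Proof.
move=> grad0 u v; have /connectP [p up ->] := conn u v.
elim: p u up => //= w p IHp u /andP [/adjacent_dart [[e b] [ue ew]] wp].
rewrite -(IHp _ wp) -ue -ew; have /eqP := congr1 (fun f : cochain E => f e) grad0.
by rewrite !ffunE subr_eq0 /dhead /dtail; case: b {ue ew} => /eqP.
Qed.

Lemma jump_eq0_const y : jump y = 0 -> forall F G, y F = y G.
Proof.
move=> jump0; pose g d := y (face_t_of d).
have g_flip d : g (dflip d) = g d.
  case: d => e b; have /eqP := congr1 (fun f : cochain E => f e) jump0.
  by rewrite !ffunE subr_eq0 /g; case: b => /eqP.
have g_sigma d : g (sigma d) = g d.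
  have -> : sigma d = facep sigma (dflip d) by rewrite /facep dflipK.
  by rewrite /g face_t_of_facep -/(g _) g_flip.
have g_tail d d' : dtail d = dtail d' -> g d = g d'.
  case: rot => _ /[apply]; apply: fconnect_invariant => {}d.
  by rewrite /= g_sigma eqxx.
suff g_const d d' : g d = g d'.
  by move=> F G; have [[d ->] [d' ->]] := (face_t_ofP F, face_t_ofP G); apply: g_const.
have /connectP [p dp ld'] := conn (dtail d) (dtail d').
elim: p d dp ld' => [|w p IHp] d /=; first by move=> _ /esym/g_tail.
case/andP => /adjacent_dart [a [ad aw]] wp ld'.
by rewrite (g_tail d a) ?ad // -g_flip; apply: IHp; rewrite /= -/(dhead a) aw.
Qed.

Lemma dim_limg_grad : (#|V| <= \dim (limg (linfun grad)) + 1)%N.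
Proof.
have := limg_ker_dim (linfun grad) fullv; rewrite capfv dim_cochain => <-.
rewrite addnC leq_add2l; apply: dim_const_le1 => x.
by rewrite memv_ker lfunE => /eqP /grad_eq0_const.
Qed.

Lemma dim_limg_jump : (#|faces sigma| <= \dim (limg (linfun jump)) + 1)%N.
Proof.
have := limg_ker_dim (linfun jump) fullv; rewrite capfv dim_cochain card_sig => <-.
rewrite addnC leq_add2l; apply: dim_const_le1 => y.
by rewrite memv_ker lfunE => /eqP /jump_eq0_const.
Qed.

Lemma limg_grad_jump_cap : (limg (linfun grad) :&: limg (linfun jump) = 0)%VS.
Proof.
apply/eqP; rewrite -subv0; apply/subvP => z; rewrite memv_cap memv0.
case/andP => /memv_imgP [x _ ->] /memv_imgP [y _]; rewrite !lfunE /= => gxy.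
by apply/eqP/dot_self_eq0; rewrite {2}gxy dot_grad_jump.
Qed.

Hypothesis euler : planar_map V sigma.

Lemma limg_grad_jump_full : (limg (linfun grad) + limg (linfun jump) = fullv)%VS.
Proof.
apply/eqP; rewrite eqEdim subvf dimv_disjoint_sum ?limg_grad_jump_cap // dim_cochain.
by have := dim_limg_grad; have := dim_limg_jump; move: euler; rewrite /planar_map; lia.
Qed.

Lemma grad_of_dot_jump_eq0 phi :
  (forall y, dot phi (jump y) = 0) -> exists x, phi = grad x.
Proof.
move=> phi_jump; have : phi \in fullv by rewrite memvf.
rewrite -limg_grad_jump_full => /memv_addP [_ /memv_imgP [x _ ->]] [_ /memv_imgP [y _ ->]].
rewrite !lfunE /= => phiE; exists x.
have jump0 : jump y = 0.
  by apply: dot_self_eq0; have := phi_jump y; rewrite phiE dotDl dot_grad_jump add0r.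
by rewrite phiE jump0 addr0.
Qed.

End Planar.
End Cochains.

(** * Edges and faces around a set of vertices *)

Section Star.
Variables (V E : finType) (src tgt : E -> V) (sigma : {perm dart E}) (U : {set V}).

Definition star_edges : {set E} := [set e | (src e \in U) || (tgt e \in U)].

Definition star_faces := [set F : face_t sigma | [exists d in val F, d.1 \in star_edges]].

Lemma face_t_of_star d : d.1 \in star_edges -> face_t_of sigma d \in star_faces.
Proof. by move=> dU; rewrite inE; apply/existsP; exists d; rewrite /= mem_face. Qed.

End Star.

Section StarEuler.
Variables (V E : finType) (src tgt : E -> V) (sigma : {perm dart E}).
Hypotheses (rot : rotation_system src tgt sigma) (conn : graph_connected src tgt).
Hypothesis euler : planar_map V sigma.
Local Notation face_t := (face_t sigma).
Local Notation face_t_of := (face_t_of sigma).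
Local Notation grad := (grad src tgt).
Local Open Scope ring_scope.

Definition face_unit (F : face_t) : cochain face_t := [ffun G => (G == F)%:R].

Lemma sum_face_unit (y : cochain face_t) G : \sum_F y F * face_unit F G = y G.
Proof.
rewrite (bigD1 G) //= ffunE eqxx mulr1 big1 ?addr0 // => F /negbTE FG.
by rewrite ffunE eq_sym FG mulr0.
Qed.

Lemma dot_jump_sum phi y : dot phi (jump y) = \sum_F y F * dot phi (jump (face_unit F)).
Proof.
rewrite /dot; under [RHS]eq_bigr do rewrite mulr_sumr.
rewrite [RHS]exchange_big; apply: eq_bigr => e _ /=.
under eq_bigr do rewrite mulrCA.
rewrite -mulr_sumr; congr (_ * _).
under eq_bigr do rewrite ffunE mulrBr.
by rewrite sumrB !sum_face_unit ffunE.
Qed.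

Lemma sum_dot_jump_unit phi : \sum_F dot phi (jump (face_unit F)) = 0.
Proof.
have := dot_jump_sum phi [ffun=> 1]; under eq_bigr do rewrite ffunE mul1r.
by move <-; rewrite /dot big1 // => e _; rewrite !ffunE subrr mulr0.
Qed.

Variable U : {set V}.
Local Notation star_edges := (star_edges src tgt U).
Local Notation star_faces := (star_faces src tgt sigma U).

Lemma dot_jump_unit_off_star (phi : cochain E) F :
  (forall e, e \notin star_edges -> phi e = 0) -> F \notin star_faces ->
  dot phi (jump (face_unit F)) = 0.
Proof.
move=> phi_off FU; rewrite /dot big1 // => e _.
have [eU|/phi_off ->] := boolP (e \in star_edges); last by rewrite mul0r.
have side b : (face_t_of (e, b) == F) = false.
  by apply: contraNF FU => /eqP <-; apply: face_t_of_star.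
by rewrite !ffunE !side subrr mulr0.
Qed.

Variable F0 : face_t.

Definition star_constraint :=
  ({e | e \notin star_edges} + {F | F \in star_faces :\ F0})%type.

Definition star_test (phi : cochain E) : cochain star_constraint :=
  [ffun i => match i with
             | inl e => phi (val e)
             | inr F => dot phi (jump (face_unit (val F)))
             end].

Definition extend0 (z : cochain {v | v \in U}) : cochain V :=
  [ffun v => if insub v is Some u then z u else 0].

Fact star_test_is_linear : linear star_test.
Proof.
by move=> k p q; apply/ffunP => [[e|F]]; rewrite !ffunE ?dotDl ?dotZl.
Qed.

Fact extend0_is_linear : linear extend0.
Proof.
move=> k p q; apply/ffunP => v; rewrite !ffunE.
by case: insubP => [u _ _|_]; rewrite ?ffunE // /GRing.scale /= mulr0 addr0.
Qed.

HB.instance Definition _ := GRing.isLinear.Build rat _ _ _ star_test star_test_is_linear.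
HB.instance Definition _ := GRing.isLinear.Build rat _ _ _ extend0 extend0_is_linear.

Variable r0 : V.
Hypothesis outer_conn :
  forall r, r \notin U -> connect [rel u v | [&& u \notin U, v \notin U & arc src tgt u v]] r0 r.
Hypothesis F0U : F0 \in star_faces.

Lemma lker_star_test : (lker (linfun star_test) <= limg (linfun (grad \o extend0)))%VS.
Proof.
apply/subvP => phi; rewrite memv_ker lfunE /= => /eqP test0.
have phi_off e : e \notin star_edges -> phi e = 0.
  move=> eU; have := congr1 (fun f : cochain star_constraint => f (inl (exist _ e eU))) test0.
  by rewrite !ffunE.
have phi_jump_ne F : F != F0 -> dot phi (jump (face_unit F)) = 0.
  move=> FF0; have [FU|] := boolP (F \in star_faces); last exact: dot_jump_unit_off_star.
  have FU' : F \in star_faces :\ F0 by rewrite in_setD1 FF0.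
  have := congr1 (fun f : cochain star_constraint => f (inr (exist _ F FU'))) test0.
  by rewrite !ffunE.
have phi_jump F : dot phi (jump (face_unit F)) = 0.
  have [->|] := eqVneq F F0; last exact: phi_jump_ne.
  have := sum_dot_jump_unit phi.
  by rewrite (bigD1 F0) //= big1 ?addr0 // => F /phi_jump_ne.
have [x phiE] : exists x, phi = grad x.
  apply: (grad_of_dot_jump_eq0 rot conn euler) => y.
  by rewrite dot_jump_sum big1 // => F _; rewrite phi_jump mulr0.
have x_out r : r \notin U -> x r = x r0.
  move=> rU; have /connectP [p r0p ->] := outer_conn rU.
  elim: p r0 r0p => //= w p IHp u.
  case/andP => /and3P [uU wU /existsP [e /andP [/eqP eu /eqP ew]]] wp.
  have eU : e \notin star_edges by rewrite inE eu ew negb_or uU wU.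
  rewrite IHp //; have /eqP := phi_off e eU.
  by rewrite phiE ffunE eu ew subr_eq0 => /eqP.
apply/memv_imgP; exists [ffun u => x (val u) - x r0]; first exact: memvf.
have extend0E v : extend0 [ffun u => x (val u) - x r0] v = x v - x r0.
  by rewrite ffunE; case: insubP => [u _ <-|/x_out ->]; rewrite ?ffunE ?subrr.
by rewrite lfunE phiE /=; apply/ffunP => e; rewrite [LHS]ffunE [RHS]ffunE !extend0E; ring.
Qed.

(* Rank-nullity for [star_test]: its kernel consists of gradients of
   potentials vanishing off U. *)
Lemma star_edges_lt : (#|star_edges| < #|U| + #|star_faces|)%N.
Proof.
have := limg_ker_dim (linfun star_test) fullv; rewrite capfv !dim_cochain.
have := limg_ker_dim (linfun (grad \o extend0)) fullv; rewrite capfv dim_cochain card_sig.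
have := dimvS lker_star_test.
have := dimvS (subvf (limg (linfun star_test))); rewrite dim_cochain card_sum !card_sig.
have := cardC star_edges; have := cardsD1 F0 star_faces; rewrite F0U.
have -> : #|[pred e | e \notin star_edges]| = #|[predC star_edges]| by apply: eq_card.
have -> : #|[pred F in star_faces :\ F0]| = #|star_faces :\ F0| by apply: eq_card.
have -> : #|[pred v in U]| = #|U| by apply: eq_card.
lia.
Qed.

End StarEuler.

(** * Counting switches around a set of vertices *)

Section StarCount.
Variables (V E : finType) (src tgt : E -> V) (sigma : {perm dart E}).
Hypothesis rot : rotation_system src tgt sigma.
Local Notation dart := (dart E).
Local Notation dtail := (dtail src tgt).
Local Notation dhead := (dhead src tgt).
Local Notation face_t := (face_t sigma).
Local Notation face_t_of := (face_t_of sigma).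

Definition rot_switch (a : dart) := a.2 != (sigma a).2.
Definition face_switch (d : dart) := d.2 != (facep sigma d).2.

(* The angle between a and [sigma a] at the tail of a is a switch of the
   rotation exactly when it is not a switch of the boundary of the face of
   [dflip a]. *)
Lemma face_switch_flip a : face_switch (dflip a) = ~~ rot_switch a.
Proof. by rewrite /face_switch /facep dflipK /rot_switch /=; case: a.2; case: (sigma a).2. Qed.

Lemma card_faces (P : pred dart) : \sum_(F : face_t) #|[set d in val F | P d]| = #|P|.
Proof.
rewrite (card_sum_fibers face_t_of); apply: eq_bigr => F _.
by apply: eq_card => d; rewrite !inE mem_face_t andbC.
Qed.

Variable U : {set V}.
Local Notation star_edges := (star_edges src tgt U).
Local Notation star_faces := (star_faces src tgt sigma U).

Lemma card_star_faces (P : pred dart) : (forall d, P d -> d.1 \in star_edges) ->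
  \sum_(F in star_faces) #|[set d in val F | P d]| = #|P|.
Proof.
move=> Pstar; rewrite -card_faces [RHS](bigID (mem star_faces)) /=.
rewrite [X in _ = _ + X]big1 ?addn0 // => F FU.
apply/eqP; rewrite cards_eq0; apply/eqP/setP => d; rewrite !inE.
by apply: contraNF FU => /andP [dF /Pstar dU]; rewrite inE; apply/existsP; exists d; rewrite dF.
Qed.

Definition cut_edges := [set e | (src e \in U) != (tgt e \in U)].

Definition face_switches (F : {set dart}) :=
  #|[set d in F | (dhead d \in U) && face_switch d]|.

Definition cut_darts (F : {set dart}) := #|[set d in F | d.1 \in cut_edges]|.

Lemma two_rot_switches u : inner_vertex src tgt u ->
  (2 <= #|[pred a | (dtail a == u) && rot_switch a]|)%N.
Proof.
move=> [[e1 e1u] [e2 e2u]].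
have [at1 at2] : dtail (e1, true) = u /\ dtail (e2, false) = u by [].
have [c12 c21] : fconnect sigma (e1, true) (e2, false) /\ fconnect sigma (e2, false) (e1, true).
  by case: rot => _ rot_conn; split; apply: rot_conn; rewrite at1 at2.
have [z1 [c1 z1p z1n]] := fconnect_exit (p := fun a : dart => a.2) c12 isT isT.
have [z2 [c2 z2n z2p]] := fconnect_exit (p := fun a : dart => ~~ a.2) c21 isT isT.
have z12 : z1 != z2 by apply: contraNneq z2n => <-.
apply: (@leq_trans #|[set z1; z2]|); first by rewrite cards2 z12.
apply: subset_leq_card; apply/subsetP => a.
rewrite !inE /rot_switch => /orP [] /eqP ->.
  by rewrite (dtail_fconnect rot c1) at1 eqxx z1p (negbTE z1n).
by rewrite (dtail_fconnect rot c2) at2 eqxx; move: z2n z2p; case: z2.2; case: (sigma z2).2.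
Qed.

Lemma angles_at_split : #|[pred a | dtail a \in U]| =
  (#|[pred a | (dtail a \in U) && rot_switch a]| +
   #|[pred d | (dhead d \in U) && face_switch d]|)%N.
Proof.
rewrite -(cardID rot_switch); congr (_ + _).
have -> : #|[pred d | (dhead d \in U) && face_switch d]| =
          #|[set d | (dhead d \in U) && face_switch d]| by apply: eq_card => d; rewrite inE.
rewrite -(card_preimset _ (inv_inj (@dflipK E))); apply: eq_card => a.
by rewrite !inE /dhead dflipK face_switch_flip andbC.
Qed.

Lemma rot_switches_at_U : {in U, forall u, inner_vertex src tgt u} ->
  (2 * #|U| <= #|[pred a | (dtail a \in U) && rot_switch a]|)%N.
Proof.
move=> in_out; rewrite (card_sum_fibers dtail) (bigID (mem U)) /=.
apply: leq_trans (leq_addr _ _) ; rewrite mulnC -sum_nat_const; apply: leq_sum => u uU.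
apply: leq_trans (two_rot_switches (in_out u uU)) _.
by apply: subset_leq_card; apply/subsetP => a; rewrite !inE => /andP [/eqP -> ->]; rewrite uU eqxx.
Qed.

Lemma face_switches_sum : \sum_(F in star_faces) face_switches (val F) =
  #|[pred d | (dhead d \in U) && face_switch d]|.
Proof.
apply: card_star_faces => -[e b] /andP [eU _]; rewrite inE.
by move: eU; rewrite /dhead /dtail /=; case: b => ->; rewrite ?orbT.
Qed.

Lemma cut_darts_sum : \sum_(F in star_faces) cut_darts (val F) = (2 * #|cut_edges|)%N.
Proof.
rewrite card_star_faces => [|d]; last by rewrite !inE; case: (src _ \in U); case: (tgt _ \in U).
rewrite mulnC -(card_bool) -cardsT -cardsX; apply: eq_card => d.
by rewrite inE unfold_in /= !inE andbT.
Qed.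

Lemma angles_cut_le :
  (#|[pred a | dtail a \in U]| + #|cut_edges| <= 2 * #|star_edges|)%N.
Proof.
rewrite !card_sum_bool big_dart big_distrr -big_split /=; apply: leq_sum => e _.
by rewrite !inE /dtail /=; case: (src e \in U); case: (tgt e \in U).
Qed.

Lemma star_count_le : {in U, forall u, inner_vertex src tgt u} ->
    (forall F : face_t, F \in star_faces ->
       4 <= 2 * face_switches (val F) + cut_darts (val F))%N ->
  (#|U| + #|star_faces| <= #|star_edges|)%N.
Proof.
move=> in_out face_bound.
have faces4 : (4 * #|star_faces| <=
    2 * #|[pred d | (dhead d \in U) && face_switch d]| + 2 * #|cut_edges|)%N.
  rewrite -face_switches_sum -cut_darts_sum big_distrr -big_split mulnC -sum_nat_const.
  exact: leq_sum.
have := angles_at_split; have := rot_switches_at_U in_out; have := angles_cut_le.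
lia.
Qed.

End StarCount.

(** * Directed paths and boundaries of anchorable faces *)

Section EdgePaths.
Variables (V E : finType) (src tgt : E -> V).
Local Notation link := (fun e f : E => tgt e == src f).
Local Notation touches A := (fun e => A (src e) || A (tgt e)).

Lemma path_enters (A : pred V) e0 p : path link e0 p -> ~~ A (src e0) ->
  has (touches A) (e0 :: p) -> exists2 e, e \in e0 :: p & ~~ A (src e) && A (tgt e).
Proof.
elim: p e0 => [|e1 p IHp] e0 /= => [_ Ae0|/andP [/eqP e01 e1p] Ae0].
  by rewrite orbF (negbTE Ae0) => Ae0'; exists e0; rewrite ?mem_head ?Ae0.
have [At0|At0 touch] := boolP (A (tgt e0)); first by exists e0; rewrite ?mem_head ?Ae0.
have Ae1 : ~~ A (src e1) by rewrite -e01.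
have touch1 : has (touches A) (e1 :: p) by move: touch; rewrite (negbTE Ae0).
by have [e ep eA] := IHp e1 e1p Ae1 touch1; exists e; rewrite // inE ep orbT.
Qed.

Lemma path_rev_link e0 p : path link e0 p ->
  path (fun e f => src e == tgt f) (last e0 p) (rev (belast e0 p)).
Proof. by rewrite rev_path; apply: sub_path => e f; rewrite eq_sym. Qed.

Lemma path_src_neq_last e0 p : path link e0 p -> uniq (src e0 :: map tgt (e0 :: p)) ->
  forall e, e \in e0 :: p -> src e != tgt (last e0 p).
Proof.
elim: p e0 => [|e1 p IHp] e0 /=; first by rewrite inE andbT => _ s0t0 e; rewrite inE => /eqP ->.
case/andP => /eqP e01 e1p /andP [s0_tgts vs_uniq] e; rewrite inE => /orP [/eqP ->|ep].
  by apply: contraNneq s0_tgts => ->; rewrite inE -last_map mem_last orbT.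
by apply: IHp; rewrite -?e01.
Qed.

End EdgePaths.

Lemma path_leaves (V E : finType) (src tgt : E -> V) (A : pred V) e0 p :
  path (fun e f => tgt e == src f) e0 p -> ~~ A (tgt (last e0 p)) ->
  has (fun e => A (src e) || A (tgt e)) (e0 :: p) ->
  exists2 e, e \in e0 :: p & A (src e) && ~~ A (tgt e).
Proof.
move=> /path_rev_link e0p_rev Alast touch.
have mem_rev_path e : (e \in last e0 p :: rev (belast e0 p)) = (e \in e0 :: p).
  by rewrite -rev_rcons -lastI mem_rev.
have [|e] := path_enters (src := tgt) (tgt := src) e0p_rev Alast.
  by have [e ep te] := hasP touch; apply/hasP; exists e; rewrite ?mem_rev_path // orbC.
by rewrite mem_rev_path andbC; exists e.
Qed.

Section DirectedPaths.
Variables (V E : finType) (src tgt : E -> V).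
Local Notation dpath := (dpath src tgt).
Local Notation link := (fun e f : E => tgt e == src f).

Lemma path_closed (Q : pred V) e0 p : path link e0 p -> Q (src e0) ->
    (forall e, e \in e0 :: p -> Q (src e) -> Q (tgt e)) ->
  forall e, e \in e0 :: p -> Q (src e) && Q (tgt e).
Proof.
move=> e0p Qs0 Qclosed; suff: ~~ has (fun e => ~~ Q (src e) || ~~ Q (tgt e)) (e0 :: p).
  by move/hasPn => Qp e /Qp; rewrite negb_or !negbK.
apply/negP => /(path_enters (A := predC Q) e0p) [|e ep /andP [/negbNE Qs]]; first by rewrite /= Qs0.
by rewrite /= (Qclosed e ep Qs).
Qed.

Lemma dpath_closed (Q : pred V) s t p : dpath s t p -> Q s ->
    (forall e, e \in p -> Q (src e) -> Q (tgt e)) ->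
  Q t /\ forall e, e \in p -> Q (src e) && Q (tgt e).
Proof.
case: p => [|e0 p] // /and4P [/eqP s0 e0p /eqP <- _] Qs Qclosed.
have Qs0 : Q (src e0) by rewrite s0.
have Qp := path_closed e0p Qs0 Qclosed.
by split=> //; case/andP: (Qp _ (mem_last e0 p)).
Qed.

Lemma dpath_src_neq s t p : dpath s t p -> forall e, e \in p -> src e != t.
Proof.
case: p => [|e0 p] //= /and4P [/eqP s0 e0p /eqP <- vs_uniq] e.
by apply: path_src_neq_last; rewrite // s0.
Qed.

Lemma dpath_tgt_neq s t p : dpath s t p -> forall e, e \in p -> tgt e != s.
Proof.
case: p => [|e0 p] //= /and4P [_ _ _ /andP [s_tgts _]] e ep.
by apply: contraNneq s_tgts => <-; exact: (map_f tgt ep).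
Qed.

Variable U : {set V}.
Local Notation cut_edges := (cut_edges src tgt U).

Definition cut_one_way : Prop :=
  (forall e, src e \notin U -> tgt e \notin U) \/ (forall e, src e \in U -> tgt e \in U).

Lemma dpath_cut s t p : dpath s t p -> (s \in U) != (t \in U) ->
  exists2 e, e \in p & e \in cut_edges.
Proof.
case: p => [|e0 p] // /and4P [/eqP s0 e0p /eqP tl _].
have cut e : (src e \in U) != (tgt e \in U) -> e \in cut_edges by rewrite inE.
case: (boolP (s \in U)) => sU /= => [tU|/negPn tU].
  have tlU : ~~ (tgt (last e0 p) \in U) by rewrite tl.
  have touch : has (fun e => (src e \in U) || (tgt e \in U)) (e0 :: p) by rewrite /= s0 sU.
  have [e ep /andP [sUe tUe]] := path_leaves (A := [in U]) e0p tlU touch.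
  by exists e => //; apply: cut; move: sUe tUe => /= -> /negbTE ->.
have s0U : src e0 \notin U by rewrite s0.
have touch : has (fun e => (src e \in U) || (tgt e \in U)) (e0 :: p).
  by apply/hasP; exists (last e0 p); rewrite ?mem_last // tl tU orbT.
have [e ep /andP [sUe tUe]] := path_enters (A := [in U]) e0p s0U touch.
by exists e => //; apply: cut; move: sUe tUe => /= /negbTE -> ->.
Qed.

Lemma dpath_touch s t p : cut_one_way -> dpath s t p ->
  has (fun e => (src e \in U) || (tgt e \in U)) p -> (s \in U) || (t \in U).
Proof.
move=> one_way; case: p => [|e0 p] // /and4P [/eqP s0 e0p /eqP tl _] touch.
apply/norP => -[sU tU]; case: one_way => [no_entry|no_exit].
  have s0U : src e0 \notin U by rewrite s0.
  have [e _ /andP [/no_entry /negbTE ->]] // := path_enters (A := [in U]) e0p s0U touch.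
have tlU : ~~ (tgt (last e0 p) \in U) by rewrite tl.
by have [e _ /andP [/no_exit ->]] := path_leaves (A := [in U]) e0p tlU touch.
Qed.

End DirectedPaths.

Section FaceBound.
Variables (V E : finType) (src tgt : E -> V) (sigma : {perm dart E}) (U : {set V}).
Hypothesis rot : rotation_system src tgt sigma.
Local Notation dhead := (dhead src tgt).
Local Notation dpath := (dpath src tgt).
Local Notation face_switches := (face_switches src tgt sigma U).
Local Notation cut_darts := (cut_darts src tgt U).

Section Boundary.
Variable F : {set dart E}.
Hypothesis Ffaces : F \in faces sigma.
Variables (s t : V) (P Q : seq E).
Hypotheses (sPt : dpath s t P) (sQt : dpath s t Q).
Hypotheses (memP : forall e, ((e, true) \in F) = (e \in P))
           (memQ : forall e, ((e, false) \in F) = (e \in Q)).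

Lemma face_switches_ends : ((s \in U) + (t \in U) <= face_switches F)%N.
Proof.
case: P sPt memP => [|eP P'] // /[dup] sPt' /and4P [_ _ /eqP tl _] memP'.
case: Q sQt memQ => [|eQ Q'] // /[dup] sQt' /and4P [/eqP s0 _ _ _] memQ'.
pose dT := (last eP P', true); pose dS := (eQ, false).
have dT_switch : face_switch sigma dT.
  rewrite /face_switch; case Ef: (facep sigma dT) => [e' []] //.
  have : e' \in eP :: P' by rewrite -memP' -Ef mem_facep // memP' mem_last.
  move/(dpath_src_neq sPt'); have := dtail_facep rot dT.
  by rewrite Ef /dtail /= => ->; rewrite /dhead /dtail /= tl eqxx.
have dS_switch : face_switch sigma dS.
  rewrite /face_switch; case Ef: (facep sigma dS) => [e' []] //.
  have : e' \in eQ :: Q' by rewrite -memQ' -Ef mem_facep // memQ' mem_head.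
  move/(dpath_tgt_neq sQt'); have := dtail_facep rot dS.
  by rewrite Ef /dtail /= => ->; rewrite /dhead /dtail /= s0 eqxx.
have [dTF dSF] : dT \in F /\ dS \in F by rewrite memP' memQ' mem_last mem_head.
pose S := [set d in F | (dhead d \in U) && face_switch sigma d].
have [dTS dSS] : dT \in S = (t \in U) /\ dS \in S = (s \in U).
  by rewrite !inE dTF dSF dT_switch dS_switch /dhead /dtail /= tl s0 !andbT.
rewrite /face_switches -/S.
case: (boolP (s \in U)) => sU; case: (boolP (t \in U)) => tU; rewrite /= ?addn0 //.
- apply: (@leq_trans #|[set dT; dS]|); first by rewrite cards2 xpair_eqE andbF.
  by apply/subset_leq_card/subsetP => d; rewrite in_set2 => /orP [] /eqP ->; rewrite ?dTS ?dSS.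
- by apply/card_gt0P; exists dS; rewrite dSS.
- by apply/card_gt0P; exists dT; rewrite dTS.
Qed.

Lemma cut_darts_two : (exists2 e, e \in P & e \in cut_edges src tgt U) ->
  (exists2 e, e \in Q & e \in cut_edges src tgt U) -> (2 <= cut_darts F)%N.
Proof.
move=> [e eP] + [e' eQ]; rewrite !inE => ecut e'cut.
apply: (@leq_trans #|[set (e, true); (e', false)]|); first by rewrite cards2 xpair_eqE andbF.
apply/subset_leq_card/subsetP => d; rewrite in_set2 => /orP [] /eqP ->.
  by rewrite !inE memP eP ecut.
by rewrite !inE memQ eQ e'cut.
Qed.

End Boundary.

Lemma anchorable_face_bound F : F \in faces sigma -> anchorable_interior src tgt F ->
  (exists2 d, d \in F & d.1 \in star_edges src tgt U) -> cut_one_way src tgt U ->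
  (4 <= 2 * face_switches F + cut_darts F)%N.
Proof.
move=> Ffaces [s [t [[Q [sQt memQ']] [P [sPt memP']] _ _]]] [[e b] dF /= eU] one_way.
have memP e' : ((e', true) \in F) = (e' \in P) by rewrite -memP' inE.
have memQ e' : ((e', false) \in F) = (e' \in Q) by rewrite -memQ' inE.
have ends := face_switches_ends Ffaces sPt sQt memP memQ.
have : (s \in U) || (t \in U).
  move: eU; rewrite inE => eU.
  case: b dF => dF; [apply: (dpath_touch one_way sPt) | apply: (dpath_touch one_way sQt)];
    by apply/hasP; exists e; rewrite -?memP -?memQ.
have [st_eq|st_neq] := eqVneq (s \in U) (t \in U).
  by rewrite -st_eq orbb => sU; move: ends; rewrite -st_eq sU; lia.
have := cut_darts_two memP memQ (dpath_cut sPt st_neq) (dpath_cut sQt st_neq).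
by move: ends st_neq; case: (s \in U); case: (t \in U) => //=; lia.
Qed.

End FaceBound.

(** * Chains of atomic cells *)

Section AboveChains.
Variables (E : finType) (sigma : {perm dart E}) (ext : {set dart E}).
Local Notation dart := (dart E).
Local Notation face_t := (face_t sigma).
Local Notation above := (above_rel sigma ext).
Local Open Scope ring_scope.

Definition edge_unit (e : E) : cochain E := [ffun e' => (e' == e)%:R].

Definition shared_edge (c c' : {set dart}) : cochain E :=
  if [pick e | ((e, true) \in c) && ((e, false) \in c')] is Some e then edge_unit e else 0.

Definition chain_flow (c : {set dart}) (s : seq {set dart}) : cochain E :=
  \sum_(cc <- zip (c :: s) s) shared_edge cc.1 cc.2.

Definition face_value (y : cochain face_t) (c : {set dart}) : rat :=
  if insub c is Some F then y F else 0.

Lemma dot_edge_unit e z : dot (edge_unit e) z = z e.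
Proof.
rewrite /dot (bigD1 e) //= ffunE eqxx mul1r big1 ?addr0 // => e' /negbTE e'e.
by rewrite ffunE e'e mul0r.
Qed.

Lemma shared_edgeP c c' : directly_above c c' ->
  exists e, [/\ shared_edge c c' = edge_unit e, (e, true) \in c & (e, false) \in c'].
Proof.
rewrite /shared_edge; case: pickP => [e /andP [ec ec']|none]; first by exists e.
by case/existsP=> e; rewrite none.
Qed.

Lemma shared_edge_ge0 c c' e : 0 <= shared_edge c c' e.
Proof. by rewrite /shared_edge; case: pickP => [e' _|_]; rewrite !ffunE ?ler0n. Qed.

Lemma chain_flow_ge0 c s e : 0 <= chain_flow c s e.
Proof. by rewrite sum_ffunE; apply: sumr_ge0 => cc _; apply: shared_edge_ge0. Qed.

Lemma above_zip c s : path above c s -> forall cc, cc \in zip (c :: s) s -> above cc.1 cc.2.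
Proof.
elim: s c => [|c' s IHs] c //= /andP [cc' c's] cc; rewrite inE => /orP [/eqP -> //|].
exact: IHs.
Qed.

Lemma atomic_cell_face c : c \in atomic_cells sigma ext -> c \in faces sigma.
Proof. by rewrite in_setD1 => /andP []. Qed.

Lemma face_valueE y c d : c \in faces sigma -> d \in c -> face_value y c = y (face_t_of sigma d).
Proof.
move=> cface dc; rewrite /face_value (insubT (fun F => F \in faces sigma) cface) /=.
by congr (y _); apply: val_inj; rewrite /= -(facesP cface dc).
Qed.

Lemma dot_chain_flow_jump c s y : path above c s ->
  dot (chain_flow c s) (jump y) = face_value y c - face_value y (last c s).
Proof.
elim: s c => [|c' s IHs] c /=.
  by move=> _; rewrite /chain_flow big_nil subrr /dot big1 // => e _; rewrite ffunE mul0r.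
case/andP => cc' c's; rewrite /chain_flow /= big_cons -/(chain_flow c' s) dotDl IHs //.
case/and3P: cc' => /atomic_cell_face cface /atomic_cell_face c'face /shared_edgeP [e [-> ec ec']].
rewrite dot_edge_unit ffunE (face_valueE y cface ec) (face_valueE y c'face ec').
by rewrite addrA subrK.
Qed.

Lemma chain_flow_head c c1 s : path above c (c1 :: s) -> exists e, 1 <= chain_flow c (c1 :: s) e.
Proof.
case/andP => /and3P [_ _ /shared_edgeP [e [Ee _ _]]] _; exists e.
by rewrite /chain_flow /= big_cons -/(chain_flow c1 s) ffunE Ee ffunE eqxx lerDl chain_flow_ge0.
Qed.

Hypothesis ext_face : ext \in faces sigma.

Lemma atomic_cell_ext_disjoint c d : c \in atomic_cells sigma ext -> d \in c -> d \notin ext.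
Proof.
move=> c_cell dc; have cface := atomic_cell_face c_cell.
apply: contraTN c_cell => d_ext.
by rewrite in_setD1 (facesP cface dc) -(facesP ext_face d_ext) eqxx.
Qed.

Lemma chain_flow_ext c s e b : path above c s -> (e, b) \in ext -> chain_flow c s e = 0.
Proof.
move=> cs e_ext; rewrite sum_ffunE big_seq big1 // => cc /(above_zip cs).
case/and3P => c1_cell c2_cell /shared_edgeP [e' [-> e'1 e'2]]; rewrite ffunE.
have [ee'|//] := eqVneq e e'; rewrite -{e'}ee' in e'1 e'2.
case: b e_ext => e_ext; [have := atomic_cell_ext_disjoint c1_cell e'1 |
  have := atomic_cell_ext_disjoint c2_cell e'2]; by rewrite e_ext.
Qed.

End AboveChains.

Section PastingScheme.
Variables (V E : finType) (src tgt : E -> V) (sigma : {perm dart E}) (ext : {set dart E}).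
Hypotheses (rot : rotation_system src tgt sigma) (conn : graph_connected src tgt).
Hypotheses (euler : planar_map V sigma) (ext_face : ext \in faces sigma).
Hypothesis interior : forall F, F \in atomic_cells sigma ext -> anchorable_interior src tgt F.
Local Notation arc := (arc src tgt).
Local Notation star_edges := (star_edges src tgt).
Local Notation star_faces := (star_faces src tgt sigma).

Lemma no_trapped_set (U : {set V}) r0 : U != set0 ->
    (forall r, r \notin U -> connect [rel u v | [&& u \notin U, v \notin U & arc u v]] r0 r) ->
    (forall d, d \in ext -> d.1 \notin star_edges U) ->
    {in U, forall u, inner_vertex src tgt u} -> cut_one_way src tgt U -> False.
Proof.
move=> /set0Pn [u uU] outer_conn ext_off in_out one_way.
have [[e1 e1u] _] := in_out u uU.
have F0U : face_t_of sigma (e1, true) \in star_faces U.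
  by apply: face_t_of_star; rewrite inE /= e1u uU.
have := star_edges_lt rot conn euler outer_conn F0U; rewrite ltnNge => /negP; apply.
apply: (star_count_le rot in_out) => F FU.
have := FU; rewrite inE => /existsP [d /andP [dF dU]].
apply: anchorable_face_bound => //; first exact: valP; last by exists d.
apply: interior; rewrite in_setD1 (valP F) andbT.
by apply: contraTneq dU => Fext; apply: ext_off; rewrite -Fext.
Qed.

Variables sP tP : V.
Hypothesis ext_anchor : anchorable_exterior src tgt ext sP tP.
Hypothesis source : forall v, (forall e, tgt e != v) <-> v = sP.
Hypothesis sink : forall v, (forall e, src e != v) <-> v = tP.

Lemma exterior_closed (Q : pred V) : Q sP ->
    (forall e, ((e, true) \in ext) || ((e, false) \in ext) -> Q (src e) -> Q (tgt e)) ->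
  Q tP /\ forall d, d \in ext -> Q (src d.1) && Q (tgt d.1).
Proof.
move=> QsP Qclosed; case: ext_anchor => [[L [sLt memL]] [R [sRt memR]]].
have [QtP QL] : Q tP /\ forall e, e \in L -> Q (src e) && Q (tgt e).
  by apply: dpath_closed sLt QsP _ => e; rewrite -memL inE => eL; apply: Qclosed; rewrite eL.
have [_ QR] : Q tP /\ forall e, e \in R -> Q (src e) && Q (tgt e).
  by apply: dpath_closed sRt QsP _ => e; rewrite -memR inE => eR; apply: Qclosed; rewrite eR orbT.
by split=> // -[e []] d_ext; [apply: QL; rewrite -memL | apply: QR; rewrite -memR]; rewrite inE.
Qed.

Lemma inner_vertex_neq u : u != sP -> u != tP -> inner_vertex src tgt u.
Proof.
move=> usP utP; split.
  have [/existsP [e /eqP]|/existsPn no_out] := boolP [exists e, src e == u]; first by exists e.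
  by case/eqP: utP; apply/sink.
have [/existsP [e /eqP]|/existsPn no_in] := boolP [exists e, tgt e == u]; first by exists e.
by case/eqP: usP; apply/source.
Qed.

Lemma connect_source v : connect arc sP v.
Proof.
apply/negPn/negP => sPv; pose U := [set w | ~~ connect arc sP w].
have arc_reach e : connect arc sP (src e) -> connect arc sP (tgt e).
  by move/connect_trans; apply; apply/connect1/existsP; exists e; rewrite !eqxx.
have [tP_reach ext_reach] := exterior_closed (connect0 arc sP) (fun e _ => arc_reach e).
apply: (@no_trapped_set U sP).
- by apply/set0Pn; exists v; rewrite inE.
- move=> r; rewrite inE negbK => /(connect_within (a := [pred w | w \notin U])); apply.
  by move=> z sPz _; rewrite /= inE negbK.
- by move=> d /ext_reach /andP [sd td]; rewrite !inE sd td.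
- move=> u; rewrite inE => sPu; apply: inner_vertex_neq.
    by apply: contraNneq sPu => ->; apply: connect0.
  by apply: contraNneq sPu => ->.
- by left=> e; rewrite !inE !negbK; apply: arc_reach.
Qed.

Local Open Scope ring_scope.

Lemma no_monotone_potential (R : realDomainType) (x : V -> R) e0 :
    (forall e, x (src e) <= x (tgt e)) ->
    (forall e, ((e, true) \in ext) || ((e, false) \in ext) -> x (src e) = x (tgt e)) ->
  x (src e0) < x (tgt e0) -> False.
Proof.
move=> x_arc x_ext x_e0.
have x_conn u v : connect arc u v -> x u <= x v.
  case/connectP => p + ->; elim: p u => //= w p IHp u.
  case/andP => /existsP [e /andP [/eqP eu /eqP ew]] wp.
  by apply: le_trans (IHp w wp); rewrite -eu -ew.
pose U := [set v | x sP < x v].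
have [x_tP x_ext_ends] : x tP == x sP /\
    forall d, d \in ext -> (x (src d.1) == x sP) && (x (tgt d.1) == x sP).
  by apply: (exterior_closed (Q := fun v => x v == x sP)) => // e /x_ext <-.
apply: (@no_trapped_set U sP).
- apply/set0Pn; exists (tgt e0); rewrite inE.
  exact: le_lt_trans (x_conn _ _ (connect_source _)) x_e0.
- move=> r; rewrite inE -leNgt => xr.
  apply: (connect_within (a := [pred w | w \notin U]) _ (connect_source r)) => z _ zr.
  by rewrite /= inE -leNgt (le_trans (x_conn _ _ zr)).
- by move=> d /x_ext_ends /andP [/eqP xs /eqP xt]; rewrite !inE xs xt ltxx.
- move=> u; rewrite inE => xu; apply: inner_vertex_neq.
    by apply: contraTneq xu => ->; rewrite ltxx.
  by apply: contraTneq xu => ->; rewrite (eqP x_tP) ltxx.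
- by right=> e; rewrite !inE => /lt_le_trans; apply.
Qed.

Lemma above_acyclic c s : path (above_rel sigma ext) c s -> last c s = c -> s = [::].
Proof.
case: s => [//|c1 s] cs cycle; exfalso.
have [x flowE] : exists x, chain_flow c (c1 :: s) = grad src tgt x.
  apply: (grad_of_dot_jump_eq0 rot conn euler) => y.
  by rewrite (dot_chain_flow_jump _ cs) cycle subrr.
have x_flow e : x (tgt e) - x (src e) = chain_flow c (c1 :: s) e by rewrite flowE ffunE.
have [e0 flow_e0] := chain_flow_head cs.
apply: (@no_monotone_potential _ x e0).
- by move=> e; rewrite -subr_ge0 x_flow chain_flow_ge0.
- move=> e /orP [] e_ext; apply/eqP; rewrite eq_sym -subr_eq0 x_flow;
    by rewrite (chain_flow_ext ext_face cs e_ext).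
- by rewrite -subr_gt0 x_flow (lt_le_trans ltr01).
Qed.

Lemma above_antisym a b :
  connect (above_rel sigma ext) a b -> connect (above_rel sigma ext) b a -> a = b.
Proof.
move=> /connectP [p ap ->] /connectP [q pq qa].
have : p ++ q = [::] by apply: (@above_acyclic a); rewrite ?cat_path ?ap ?last_cat -?qa.
by case: p {ap pq qa}.
Qed.

End PastingScheme.

Theorem mainTheorem19 (V E : finType) (src tgt : E -> V)
    (sigma : {perm dart E}) (ext : {set dart E}) :
  pasting_scheme src tgt sigma ext ->
  let R := connect (above_rel sigma ext) in
  [/\ (forall a, a \in atomic_cells sigma ext -> R a a),
      (forall a b c, a \in atomic_cells sigma ext ->
         b \in atomic_cells sigma ext -> c \in atomic_cells sigma ext ->
         R a b -> R b c -> R a c) &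
      (forall a b, a \in atomic_cells sigma ext ->
         b \in atomic_cells sigma ext -> R a b -> R b a -> a = b)].
Proof.
move=> [[rot conn euler ext_face] [sP [tP [ext_anchor interior source sink]]]] R.
split=> [a _|a b c _ _ _|a b _ _]; first exact: connect0; first exact: connect_trans.
exact: (above_antisym rot conn euler ext_face interior ext_anchor source sink).
Qed.
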